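(* Let $e:S\to A$ and $f:A\to X$ be morphisms in a weakly unital category $\mathbb{C}$. If $fe$ has trivial centralizer, then so does $f$. In particular (taking $A=X$, $f=1_X$), if $e:S\to X$ has trivial centralizer, then $X$ has trivial center.
   Context: A pointed category $\mathbb{C}$ with finite products is weakly unital if for all objects $A,B$ the morphisms $\langle 1,0\rangle:A\to A\times B$ and $\langle 0,1\rangle:B\to A\times B$ are jointly epimorphic. Morphisms $f:A\to X$ and $g:B\to X$ commute if there exists $\varphi:A\times B\to X$ with $\varphi\langle1,0\rangle=f$ and $\varphi\langle0,1\rangle=g$. The centralizer $z_f:Z_X(A,f)\to X$ of $f$ is the terminal object in the category of morphisms $g:B\to X$ commuting with $f$ (morphisms being maps over $X$); $f$ has trivial centralizer if $Z_X(A,f)=0$. The center of $X$ is the centralizer of $1_X$; $X$ has trivial center if it is $0$. *)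

Set Implicit Arguments.

Record Category := {
  Ob :> Type;
  Hom : Ob -> Ob -> Type;
  idm : forall A : Ob, Hom A A;
  comp : forall A B C : Ob, Hom B C -> Hom A B -> Hom A C;
  comp_assoc : forall A B C D (h : Hom C D) (g : Hom B C) (f : Hom A B),
      comp h (comp g f) = comp (comp h g) f;
  comp_id_l : forall A B (f : Hom A B), comp (idm B) f = f;
  comp_id_r : forall A B (f : Hom A B), comp f (idm A) = f
}.

Arguments Hom {c} _ _.
Arguments idm {c} _.
Arguments comp {c A B C} _ _.
Notation "g \o f" := (comp g f) (at level 40, left associativity).

Definition is_initial {C : Category} (I : C) : Type :=
  forall B : C, { h : Hom I B | forall h' : Hom I B, h' = h }.
Definition is_terminal {C : Category} (T : C) : Type :=
  forall B : C, { h : Hom B T | forall h' : Hom B T, h' = h }.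
Definition is_zero_object {C : Category} (Z : C) : Type :=
  (is_initial Z * is_terminal Z)%type.

Record BinProduct {C : Category} (A B : C) := {
  prod_ob : C;
  pr1 : Hom prod_ob A;
  pr2 : Hom prod_ob B;
  pairing : forall Y : C, Hom Y A -> Hom Y B -> Hom Y prod_ob;
  pairing_pr1 : forall Y (f : Hom Y A) (g : Hom Y B), pr1 \o pairing Y f g = f;
  pairing_pr2 : forall Y (f : Hom Y A) (g : Hom Y B), pr2 \o pairing Y f g = g;
  pairing_unique : forall Y (f : Hom Y A) (g : Hom Y B) (h : Hom Y prod_ob),
      pr1 \o h = f -> pr2 \o h = g -> h = pairing Y f g
}.

(** A pointed category with finite products: a zero object (which is also
    the empty product / terminal object) and chosen binary products. *)
Record PointedProdCategory := {
  cat :> Category;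
  zero_ob : cat;
  zero_ob_is_zero : is_zero_object zero_ob;
  bprod : forall A B : cat, BinProduct A B
}.

Section Ops.
Context {C : PointedProdCategory}.

Definition to_zero (A : C) : Hom A (zero_ob C) :=
  proj1_sig (snd (zero_ob_is_zero C) A).
Definition from_zero (B : C) : Hom (zero_ob C) B :=
  proj1_sig (fst (zero_ob_is_zero C) B).

Definition zmor (A B : C) : Hom A B := from_zero B \o to_zero A.

Definition prodO (A B : C) : C := prod_ob (bprod C A B).
Definition pair {A B Y : C} (f : Hom Y A) (g : Hom Y B) : Hom Y (prodO A B) :=
  pairing (bprod C A B) Y f g.

Definition inj1 (A B : C) : Hom A (prodO A B) := pair (idm A) (zmor A B).
Definition inj2 (A B : C) : Hom B (prodO A B) := pair (zmor B A) (idm B).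

Definition weakly_unital : Prop :=
  forall (A B Y : C) (u v : Hom (prodO A B) Y),
    u \o inj1 A B = v \o inj1 A B ->
    u \o inj2 A B = v \o inj2 A B -> u = v.

Definition commute {A B X : C} (f : Hom A X) (g : Hom B X) : Prop :=
  exists phi : Hom (prodO A B) X, phi \o inj1 A B = f /\ phi \o inj2 A B = g.

(** z : Z -> X is a centralizer of f : A -> X: a terminal object in the
    category of morphisms g : B -> X commuting with f (maps over X). *)
Definition is_centralizer {A X : C} (f : Hom A X) {Z : C} (z : Hom Z X) : Prop :=
  commute f z /\
  forall (B : C) (g : Hom B X), commute f g ->
    exists h : Hom B Z, z \o h = g /\ forall h' : Hom B Z, z \o h' = g -> h' = h.

Definition trivial_centralizer {A X : C} (f : Hom A X) : Prop :=
  exists (Z : C) (z : Hom Z X), is_centralizer f z /\ inhabited (is_zero_object Z).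

Definition trivial_center (X : C) : Prop := trivial_centralizer (idm X).

End Ops.


(* If z : Z -> X centralizes f e with Z = 0, then z is a zero map and so
   commutes with f; conversely anything commuting with f commutes with f e
   (precompose the witness with e x 1), hence factors uniquely through z.
   So z is also the centralizer of f. *)

Section Centralizers.
Context {C : PointedProdCategory}.

Lemma pr1_pair {A B Y : C} (f : Hom Y A) (g : Hom Y B) :
  pr1 (bprod C A B) \o pair f g = f.
Proof. apply pairing_pr1. Qed.

Lemma pr2_pair {A B Y : C} (f : Hom Y A) (g : Hom Y B) :
  pr2 (bprod C A B) \o pair f g = g.
Proof. apply pairing_pr2. Qed.

Lemma pair_comp {A B Y W : C} (f : Hom Y A) (g : Hom Y B) (k : Hom W Y) :
  pair f g \o k = pair (f \o k) (g \o k).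
Proof.
  apply pairing_unique; rewrite comp_assoc; apply (f_equal (fun t => t \o k)).
  - apply pr1_pair.
  - apply pr2_pair.
Qed.

Lemma zmor_comp {A B W : C} (k : Hom W A) : zmor A B \o k = zmor W B.
Proof.
  unfold zmor, to_zero. rewrite <- comp_assoc. f_equal.
  destruct (snd (zero_ob_is_zero C) W) as [h Hh]; simpl.
  now rewrite (Hh (_ \o k)).
Qed.

Lemma comp_zmor {A B W : C} (k : Hom B W) : k \o zmor A B = zmor A W.
Proof.
  unfold zmor, from_zero. rewrite comp_assoc. f_equal.
  destruct (fst (zero_ob_is_zero C) W) as [h Hh]; simpl.
  now rewrite (Hh (k \o _)).
Qed.

Lemma zero_object_hom_zmor {Z X : C} (z : Hom Z X) :
  is_zero_object Z -> z = zmor Z X.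
Proof.
  intros [initZ _]. destruct (initZ X) as [h Hh].
  now rewrite (Hh z), (Hh (zmor Z X)).
Qed.

Lemma commute_zmor {A B X : C} (f : Hom A X) : commute f (zmor B X).
Proof.
  exists (f \o pr1 (bprod C A B)). unfold inj1, inj2.
  split; rewrite <- comp_assoc, pr1_pair.
  - apply comp_id_r.
  - apply comp_zmor.
Qed.

Lemma commute_comp {A B A' B' X : C} (f : Hom A X) (g : Hom B X)
    (e : Hom A' A) (k : Hom B' B) :
  commute f g -> commute (f \o e) (g \o k).
Proof.
  intros [phi [phi1 phi2]].
  exists (phi \o pair (e \o pr1 (bprod C A' B')) (k \o pr2 (bprod C A' B'))).
  unfold inj1, inj2 in *.
  split; rewrite <- comp_assoc, pair_comp, <- !comp_assoc, pr1_pair, pr2_pair.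
  - rewrite <- phi1, <- comp_assoc, pair_comp, zmor_comp, comp_zmor.
    now rewrite comp_id_l, comp_id_r.
  - rewrite <- phi2, <- comp_assoc, pair_comp, zmor_comp, comp_zmor.
    now rewrite comp_id_l, comp_id_r.
Qed.

Lemma commute_compl {A A' B X : C} (f : Hom A X) (e : Hom A' A) (g : Hom B X) :
  commute f g -> commute (f \o e) g.
Proof. intros fg. rewrite <- (comp_id_r _ _ _ g). now apply commute_comp. Qed.

Lemma centralizer_of_comp {S A X Z : C} (e : Hom S A) (f : Hom A X) (z : Hom Z X) :
  is_centralizer (f \o e) z -> commute f z -> is_centralizer f z.
Proof.
  intros [_ univ] fz. split; [exact fz |].
  intros B g fg. apply univ. now apply commute_compl.
Qed.

Lemma trivial_centralizer_comp {S A X : C} (e : Hom S A) (f : Hom A X) :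
  trivial_centralizer (f \o e) -> trivial_centralizer f.
Proof.
  intros [Z [z [cent_z [zeroZ]]]].
  exists Z, z. split; [| now constructor].
  apply (centralizer_of_comp e); [exact cent_z |].
  rewrite (zero_object_hom_zmor z zeroZ). apply commute_zmor.
Qed.

End Centralizers.

Theorem proposition3p2 (C : PointedProdCategory) (HC : @weakly_unital C) :
  (forall (S A X : C) (e : Hom S A) (f : Hom A X),
      trivial_centralizer (f \o e) -> trivial_centralizer f) /\
  (forall (S X : C) (e : Hom S X),
      trivial_centralizer e -> trivial_center X).
Proof.
  split.
  - intros S A X e f. apply trivial_centralizer_comp.
  - intros S X e He. apply (trivial_centralizer_comp e).
    now rewrite comp_id_l.
Qed.
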